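(* Let $M$ be a finite matroid, $k\ge0$, let $e_1,\dots,e_k$ be distinct elements of $M$ and $C_0,C_1,\dots,C_k$ subsets of $M$ such that $|C_i|\ge3$ for $i=0,\dots,k$, $C_{i-1}\cap C_i=\{e_i\}$ for $i=1,\dots,k$, and $C_i\cap C_j=\emptyset$ whenever $|i-j|\ge2$. Let $e_0\in C_0\setminus\{e_1\}$ and, for $i=1,\dots,k$, let $e_i'\in C_{i-1}\setminus\{e_{i-1},e_i\}$. Define $M_0=M$ and $M_i=M_{i-1}/(C_{i-1}\setminus\{e_i,e_i'\})$ for $i=1,\dots,k$, and suppose $C_i$ is a circuit in $M_i$ for every $i=0,\dots,k$. Then $M$ contains a circuit of length at least $\sqrt{\sum_{i=0}^k|C_i|}$.
   Context: For a finite matroid $M$ with rank function $r_M$ and $F\subseteq M$, the contraction $M/F$ has ground set $M\setminus F$, and $F'\subseteq M\setminus F$ is independent in $M/F$ iff $F'$ is independent in $M$ and $r_M(F\cup F')=r_M(F)+r_M(F')$. A circuit is a minimal dependent set; its length is its number of elements. *)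

From mathcomp Require Import all_boot.
Set Implicit Arguments. Unset Strict Implicit. Unset Printing Implicit Defensive.

Record matroid (T : finType) := Matroid {
  ground : {set T};
  indep : {set T} -> bool }.

Definition is_matroid (T : finType) (M : matroid T) : Prop :=
  [/\ indep M set0,
      (forall I : {set T}, indep M I -> I \subset ground M),
      (forall I J : {set T}, J \subset I -> indep M I -> indep M J)
    & (forall I J : {set T}, indep M I -> indep M J -> #|I| < #|J| ->
         exists2 x, x \in J :\: I & indep M (x |: I))].

Definition rank (T : finType) (M : matroid T) (X : {set T}) : nat :=
  \max_(Y : {set T} | (Y \subset X) && indep M Y) #|Y|.

Definition contract (T : finType) (M : matroid T) (F : {set T}) : matroid T :=
  Matroid (ground M :\: F)
    (fun F' => [&& F' \subset ground M :\: F, indep M F' &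
                   rank M (F :|: F') == rank M F + rank M F']).

Definition circuit (T : finType) (M : matroid T) (C : {set T}) : Prop :=
  [/\ C \subset ground M, ~~ indep M C &
      forall D : {set T}, D \proper C -> indep M D].

Fixpoint contr_chain (T : finType) (M : matroid T) (C : nat -> {set T})
    (e e' : nat -> T) (i : nat) : matroid T :=
  match i with
  | 0 => M
  | j.+1 => contract (contr_chain M C e e' j) (C j :\: [set e j.+1; e' j.+1])
  end.

From mathcomp Require Import all_boot.
Set Implicit Arguments. Unset Strict Implicit. Unset Printing Implicit Defensive.

(* Let C be a circuit of M, F := C \ {a, a'} and D a circuit of M/F meeting C
   only in a.  In the independent set F ∪ (D \ a), the elements a and a' have
   fundamental circuits Z_a, Z_a', both containing D \ a.  Every f ∈ F lies in
   one of them: otherwise (F ∪ D \ a) \ f spans a and a', hence C \ f, hence f.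
   That circuit of M contains f, D \ a and a or a', so it is longer than D.
   Walking down the chain from C_k and gluing at e_j in each step yields a
   circuit of M with at least k + 1 elements.  A largest C_i extends to a
   circuit of M as well, since circuits of a contraction extend to circuits of
   the matroid; the larger of these two circuits has square at least
   (k + 1) max_i |C_i| >= sum_i |C_i|. *)

Section Rank.
Variables (T : finType) (M : matroid T).
Implicit Types (B C I J S V X Y Z : {set T}) (a x y : T).

Lemma rank_leq_card X : rank M X <= #|X|.
Proof. by apply/bigmax_leqP => Y /andP[sYX _]; apply: subset_leq_card. Qed.

Lemma indep_leq_rank X Y : Y \subset X -> indep M Y -> #|Y| <= rank M X.
Proof.
by move=> sYX iY; apply: (leq_bigmax_cond (P := fun Z => (Z \subset X) && indep M Z)); rewrite sYX.
Qed.

Definition closure X := [set x | rank M (x |: X) == rank M X].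

Lemma closureP x X : reflect (rank M (x |: X) = rank M X) (x \in closure X).
Proof. by rewrite inE; apply: eqP. Qed.

Lemma circuit_exists S : S \subset ground M -> ~~ indep M S ->
  exists2 X, circuit M X & X \subset S.
Proof.
move=> sS dS; have [X /minsetP[dX minX] sXS] := minset_exists (P := fun X => ~~ indep M X) dS.
exists X => //; split=> [|//|Y /properP[sYX [x xX xY]]]; first exact: subset_trans sXS sS.
by apply: contraT => dY; rewrite (minX Y dY sYX) xX in xY.
Qed.

Hypothesis HM : is_matroid M.

Lemma indepS X Y : Y \subset X -> indep M X -> indep M Y.
Proof. by case: HM => _ _ hered _; apply: hered. Qed.

Lemma exists_basis X : exists B, [/\ B \subset X, indep M B & #|B| = rank M X].
Proof.
case: HM => indep0 _ _ _.
have : 0 < #|[pred Y : {set T} | (Y \subset X) && indep M Y]|.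
  by apply/card_gt0P; exists set0; rewrite inE sub0set indep0.
case/(eq_bigmax_cond (fun Y : {set T} => #|Y|)) => B; rewrite inE => /andP[sBX iB] maxB.
by exists B; split; rewrite // -maxB; apply: eq_bigl => Y; rewrite inE.
Qed.

Lemma rankS X Y : X \subset Y -> rank M X <= rank M Y.
Proof.
move=> sXY; have [B [sBX iB <-]] := exists_basis X.
exact: indep_leq_rank (subset_trans sBX sXY) iB.
Qed.

Lemma indepE X : indep M X = (rank M X == #|X|).
Proof.
apply/idP/idP => [iX | /eqP rX]; first by rewrite eqn_leq rank_leq_card indep_leq_rank.
have [B [sBX iB cB]] := exists_basis X.
suff -> : X = B by [].
by apply/eqP; rewrite eq_sym eqEcard sBX cB rX leqnn.
Qed.

Lemma rank_indep X : indep M X -> rank M X = #|X|.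
Proof. by rewrite indepE => /eqP. Qed.

Lemma rank_dep X : ~~ indep M X -> rank M X < #|X|.
Proof. by rewrite indepE ltn_neqAle rank_leq_card andbT. Qed.

Lemma indep_extend I S : indep M I -> I \subset S ->
  exists J, [/\ I \subset J, J \subset S, indep M J & #|J| = rank M S].
Proof.
case: (HM) => _ _ _ augment.
move Hn : (rank M S - #|I|) => n; elim: n I Hn => [|n IHn] I Hn iI sIS.
  exists I; split => //; apply/eqP; rewrite eqn_leq indep_leq_rank //=.
  by rewrite -subn_eq0 Hn.
have [B [sBS iB cB]] := exists_basis S.
have [|x /setDP[xB xI] iIx] := augment _ _ iI iB; first by rewrite cB -subn_gt0 Hn.
have Hn' : rank M S - #|x |: I| = n by rewrite cardsU1 xI add1n subnS Hn.
have sIS' : x |: I \subset S by rewrite subUset sub1set (subsetP sBS).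
have [J [sIJ sJS iJ cJ]] := IHn _ Hn' iIx sIS'.
by exists J; split => //; apply: subset_trans sIJ; apply: subsetUr.
Qed.

Lemma rank_submod X Y : rank M (X :|: Y) + rank M (X :&: Y) <= rank M X + rank M Y.
Proof.
have [I [sI iI <-]] := exists_basis (X :&: Y).
have sIXY : I \subset X :|: Y.
  exact: subset_trans sI (subset_trans (subsetIl X Y) (subsetUl X Y)).
have [J [sIJ sJ iJ <-]] := indep_extend iI sIXY.
have JXY : J :&: X :|: J :&: Y = J by rewrite -setIUr; apply/setIidPl.
have := cardsUI (J :&: X) (J :&: Y); rewrite JXY setIACA setIid => cardJ.
have sIJXY : #|I| <= #|J :&: (X :&: Y)| by apply: subset_leq_card; rewrite subsetI sIJ.
apply: leq_trans (leq_add (leqnn #|J|) sIJXY) _.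
rewrite cardJ; apply: leq_add; apply: indep_leq_rank (subsetIr _ _) (indepS (subsetIl _ _) iJ).
Qed.

Lemma rank_submodS X Y Z : Z \subset X :&: Y ->
  rank M (X :|: Y) + rank M Z <= rank M X + rank M Y.
Proof. by move=> sZ; apply: leq_trans (rank_submod X Y); rewrite leq_add2l rankS. Qed.

Lemma closureS X Y : X \subset Y -> {subset closure X <= closure Y}.
Proof.
move=> sXY x /closureP rX; apply/closureP/anti_leq; rewrite (rankS (subsetUr [set x] Y)) andbT.
have := rank_submodS (X := Y) (Y := x |: X) (Z := X).
by rewrite subsetI sXY subsetUr rX setUCA (setUidPl sXY) leq_add2r => ->.
Qed.

Lemma rank_closure S J : {subset J <= closure S} -> rank M (S :|: J) = rank M S.
Proof.
move: {2}#|J| (erefl #|J|) => n; elim: n J => [|n IHn] J cJ sJ.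
  by rewrite (cards0_eq cJ) setU0.
have [x xJ] : {x | x \in J} by apply/sigW/card_gt0P; rewrite cJ.
have cJx : #|J :\ x| = n by move: (cardsD1 x J); rewrite xJ cJ add1n => -[].
have rSJx : rank M (S :|: J :\ x) = rank M S.
  by apply: IHn => // y /setD1P[_ /sJ].
rewrite -(setD1K xJ) setUCA -rSJx; apply/closureP.
exact: closureS (subsetUl _ _) _ (sJ x xJ).
Qed.

Lemma circuit_closure C x : circuit M C -> x \in C -> x \in closure (C :\ x).
Proof.
case=> _ dC minC xC; have iCx := minC _ (properD1 xC).
apply/closureP; rewrite setD1K //; apply/anti_leq; rewrite (rankS (subsetDl C [set x])) andbT.
by have := rank_dep dC; rewrite (cardsD1 x C) xC (rank_indep iCx).
Qed.

Lemma circuit_rank_swap C a a' V : circuit M C -> a \in C -> a' \in C ->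
  C :\: [set a; a'] \subset V -> rank M (a |: V) = rank M (a' |: V).
Proof.
move=> cC aC a'C sCV.
have swap b b' : b \in C -> C :\: [set b; b'] \subset V ->
    rank M (b |: (b' |: V)) = rank M (b' |: V).
  move=> bC sCV'; apply/closureP; apply: closureS (circuit_closure cC bC).
  apply/subsetP => z /setD1P[zb zC]; rewrite !inE; case: eqP => //= zb'.
  by apply: (subsetP sCV'); rewrite !inE zC andbT negb_or zb; apply/eqP.
have sCV' : C :\: [set a'; a] \subset V.
  by apply: subset_trans sCV; apply/subsetP => z; rewrite !inE orbC.
by rewrite -(swap a' a) // -(swap a a') // setUCA.
Qed.

Lemma circuit_mem X S y : circuit M X -> X \subset S -> indep M (S :\ y) -> y \in X.
Proof.
case=> _ dX _ sXS iSy; apply: contraT => yX; apply: contraNT dX => _.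
by apply: indepS iSy; rewrite subsetD1 sXS.
Qed.

End Rank.

Lemma cardsU_disjoint (T : finType) (A B : {set T}) :
  [disjoint A & B] -> #|A :|: B| = #|A| + #|B|.
Proof. by move=> dAB; apply/eqP; rewrite (leq_card_setU A B).2. Qed.

Section Contraction.
Variables (T : finType) (M : matroid T) (F : {set T}).
Implicit Types (B D I J X Y : {set T}).
Hypothesis HM : is_matroid M.

Lemma rank_setU_basis B Y : B \subset F -> rank M B = rank M F ->
  rank M (B :|: Y) = rank M (F :|: Y).
Proof.
move=> sBF rB; apply/anti_leq; rewrite rankS ?setSU //=.
have := rank_submodS HM (X := F) (Y := B :|: Y) (Z := B).
by rewrite subsetI sBF subsetUl setUA (setUidPl sBF) rB addnC leq_add2l => ->.
Qed.

Lemma disjoint_contract_ground B I : B \subset F -> I \subset ground M :\: F ->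
  [disjoint B & I].
Proof.
move=> sBF sI; rewrite -setI_eq0; apply/eqP/setP => z; rewrite !inE.
by apply/andP => -[/(subsetP sBF) zF /(subsetP sI)]; rewrite inE zF.
Qed.

Lemma contract_indepE B I : B \subset F -> indep M B -> #|B| = rank M F ->
  indep (contract M F) I = (I \subset ground M :\: F) && indep M (B :|: I).
Proof.
move=> sBF iB cB; rewrite /=; case sI : (I \subset ground M :\: F) => //=.
have cBI := cardsU_disjoint (disjoint_contract_ground sBF sI).
have rB : rank M B = rank M F by rewrite rank_indep.
rewrite -(rank_setU_basis _ sBF rB) -cB; apply/andP/idP => [[iI /eqP]|iBI].
  by rewrite (rank_indep HM iI) -cBI indepE // => /eqP.
have iI := indepS HM (subsetUr B I) iBI.
by rewrite iI (rank_indep HM iBI) (rank_indep HM iI) cBI.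
Qed.

Lemma contract_matroid : is_matroid (contract M F).
Proof.
have [B [sBF iB cB]] := exists_basis HM F.
have indE := contract_indepE _ sBF iB cB.
case: (HM) => _ _ _ augment; split.
- by rewrite indE sub0set setU0.
- by move=> I; rewrite indE => /andP[].
- move=> I J sJI; rewrite !indE => /andP[sI iBI].
  by rewrite (subset_trans sJI sI) (indepS HM (setUS B sJI) iBI).
move=> I J; rewrite !indE => /andP[sI iBI] /andP[sJ iBJ] ltIJ.
have [|x /setDP[xBJ xBI] iBIx] := augment _ _ iBI iBJ.
  by rewrite !cardsU_disjoint ?(disjoint_contract_ground sBF) // ltn_add2l.
have xJI : x \in J :\: I.
  by move: xBJ xBI; rewrite !inE negb_or => /orP[xB /andP[] |xJ /andP[_ ->]]; rewrite ?xB.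
exists x => //; rewrite indE setUCA iBIx andbT subUset sI andbT sub1set.
by apply: (subsetP sJ); case/setDP: xJI.
Qed.

Lemma contract_circuit B D : B \subset F -> indep M B -> #|B| = rank M F ->
  circuit (contract M F) D ->
  [/\ D \subset ground M :\: F, ~~ indep M (B :|: D)
    & forall d, d \in D -> indep M (B :|: D :\ d)].
Proof.
move=> sBF iB cB [sD dD minD]; have indE := contract_indepE _ sBF iB cB.
split=> // [|d dD']; first by move: dD; rewrite indE sD.
by have := minD _ (properD1 dD'); rewrite indE => /andP[].
Qed.

Lemma contract_circuit_lift D : circuit (contract M F) D -> exists2 X, circuit M X & D \subset X.
Proof.
move=> cD; have [B [sBF iB cB]] := exists_basis HM F.
have [sD dBD iBDd] := contract_circuit sBF iB cB cD.
have sBDg : B :|: D \subset ground M.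
  case: HM => _ ground_indep _ _.
  by rewrite subUset ground_indep // (subset_trans sD (subsetDl _ _)).
have [X cX sX] := circuit_exists sBDg dBD.
exists X => //; apply/subsetP => d dD; apply: (circuit_mem HM cX sX).
apply: (indepS HM) (iBDd d dD); apply/subsetP => z; rewrite !inE.
by case/andP => -> /orP[->|->]; rewrite ?orbT.
Qed.

End Contraction.

Section Glue.
Variables (T : finType) (M : matroid T) (C D : {set T}) (a a' : T).
Implicit Types (V Y Z : {set T}) (x : T).
Hypotheses (HM : is_matroid M) (cC : circuit M C) (aC : a \in C) (a'C : a' \in C)
  (aa' : a != a') (cD : circuit (contract M (C :\: [set a; a'])) D) (aD : a \in D)
  (DC : D :&: C \subset [set a]).

Local Notation F := (C :\: [set a; a']).
Local Notation A := (D :\ a).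

Let aF : a \notin F. Proof. by rewrite !inE eqxx. Qed.
Let a'F : a' \notin F. Proof. by rewrite !inE eqxx orbT. Qed.

Let indep_F : indep M F.
Proof. by case: cC => _ _; apply; apply/properP; split; [apply: subsetDl | exists a]. Qed.

Let contract_facts :=
  contract_circuit HM (subxx F) indep_F (esym (rank_indep HM indep_F)) cD.

Let FD : [disjoint F & D].
Proof. by case: contract_facts => sD _ _; apply: disjoint_contract_ground sD. Qed.

Let a'D : a' \notin D.
Proof.
apply/negP => a'D; have := subsetP DC a'.
by rewrite !inE a'D a'C eq_sym (negbTE aa') => /(_ isT).
Qed.

Let indep_swap x V : x \in [set a; a'] -> F \subset V -> a \notin V -> a' \notin V ->
  indep M (x |: V) = indep M (a |: V).
Proof.
move=> xaa' sFV aV a'V; case/set2P: xaa' => -> //.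
by rewrite !indepE // !cardsU1 aV a'V (circuit_rank_swap HM cC aC a'C sFV).
Qed.

Let notin_FA y : y \in [set a; a'] -> y \notin F :|: A.
Proof. by case/set2P=> ->; rewrite inE negb_or ?aF ?a'F !inE ?eqxx ?(negbTE a'D) ?andbF. Qed.

Let indep_FA : indep M (F :|: A).
Proof. by case: contract_facts => _ _; apply. Qed.

Lemma glue_fundamental x : x \in [set a; a'] ->
  exists2 Z, circuit M Z & [/\ Z \subset x |: (F :|: A), x \in Z & A \subset Z].
Proof.
move=> xaa'; case: contract_facts => sD dFD iFDd.
have xC : x \in C by case/set2P: xaa' => ->.
have aFA : a |: (F :|: A) = F :|: D by rewrite setUCA setD1K.
have sg : x |: (F :|: A) \subset ground M.
  have sCg : C \subset ground M by case: cC.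
  have sDg : D \subset ground M := subset_trans sD (subsetDl _ _).
  rewrite !subUset sub1set (subsetP sCg) //.
  by rewrite (subset_trans (subsetDl _ _) sCg) (subset_trans (subsetDl _ _) sDg).
have dx : ~~ indep M (x |: (F :|: A)).
  by rewrite indep_swap ?subsetUl ?notin_FA ?set21 ?set22 // aFA.
have [Z cZ sZ] := circuit_exists sg dx.
exists Z => //; split => //.
  by apply: (circuit_mem HM cZ sZ); rewrite setU1K ?notin_FA.
apply/subsetP => b /setD1P[ba bD]; apply: (circuit_mem HM cZ sZ).
have sFAb : F :|: A :\ b \subset F :|: A by apply: setUS; apply: subsetDl.
apply: (indepS HM (_ : _ \subset x |: (F :|: A :\ b))).
  by apply/subsetP => z; rewrite !inE => /andP[-> /or3P[->|->|->]]; rewrite ?orbT.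
have notin_FAb y : y \in [set a; a'] -> y \notin F :|: A :\ b.
  by move=> yaa'; apply/negP => /(subsetP sFAb); apply/negP; exact: notin_FA.
rewrite indep_swap ?subsetUl ?notin_FAb ?set21 ?set22 //.
apply: (indepS HM _ (iFDd b bD)); apply/subsetP => z; rewrite !inE.
by case/or3P => [/eqP->|->|/and3P[-> _ ->]]; rewrite ?orbT // aD (eq_sym a b) ba orbT.
Qed.

Lemma glue_mem f Z Z' : f \in F ->
  circuit M Z -> Z \subset a |: (F :|: A) -> a \in Z ->
  circuit M Z' -> Z' \subset a' |: (F :|: A) -> a' \in Z' -> (f \in Z) || (f \in Z').
Proof.
move=> fF cZ sZ aZ cZ' sZ' a'Z'; apply: contraT; rewrite negb_or => /andP[fZ fZ'].
have fC : f \in C by case/setDP: fF.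
pose S := (F :|: A) :\ f.
have in_closure y Y : circuit M Y -> y \in Y -> Y \subset y |: (F :|: A) -> f \notin Y ->
    y \in closure M S.
  move=> cY yY sY fY; apply: (closureS HM) (circuit_closure HM cY yY).
  apply/subsetP => z /setD1P[zy zY]; apply/setD1P; split; first by apply: contraNneq fY => <-.
  by have := subsetP sY z zY; rewrite in_setU1 (negbTE zy).
have rS : rank M (S :|: [set a; a']) = rank M S.
  apply: rank_closure => // y /set2P[->|->].
    exact: in_closure cZ aZ sZ fZ.
  exact: in_closure cZ' a'Z' sZ' fZ'.
have /closureP rSf : f \in closure M (S :|: [set a; a']).
  apply: (closureS HM) (circuit_closure HM cC fC); apply/subsetP => z /setD1P[zf zC].
  rewrite !inE zf /=; case: (z =P a) => [|_]; first by rewrite !orbT.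
  by case: (z =P a') => [|_]; rewrite ?orbT // zC.
have : rank M (F :|: A) <= rank M S.
  rewrite -rS -rSf; apply: rankS => //; apply/subsetP => z zFA.
  by rewrite in_setU1 in_setU in_setD1 zFA andbT; case: eqP.
rewrite (rank_indep HM indep_FA) (cardsD1 f) (subsetP (subsetUl _ _) _ fF) add1n.
by move/leq_trans/(_ (rank_leq_card M S)); rewrite ltnn.
Qed.

Lemma circuit_glue f : f \in F ->
  exists X, [/\ circuit M X, X \subset D :|: C, f \in X & #|D| < #|X|].
Proof.
move=> fF; have fD := disjointFr FD fF.
have long x Y : x \in [set a; a'] -> circuit M Y -> Y \subset x |: (F :|: A) ->
    x \in Y -> A \subset Y -> f \in Y ->
    exists X, [/\ circuit M X, X \subset D :|: C, f \in X & #|D| < #|X|].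
  move=> xaa' cY sY xY AY fY; exists Y; split => //.
    have xC : x \in C by case/set2P: xaa' => ->.
    apply: subset_trans sY _; rewrite subUset sub1set inE xC orbT setUC.
    by apply: setUSS; apply: subsetDl.
  have xfA : x \notin f |: A.
    rewrite in_setU1 negb_or (contra (fun xA => subsetP (subsetUr F A) x xA)) ?notin_FA // andbT.
    by apply: contraTneq fF => <-; case/set2P: xaa' => ->.
  have fA : f \notin A by rewrite inE fD andbF.
  apply: leq_trans (subset_leq_card (_ : x |: (f |: A) \subset Y)).
    by rewrite !cardsU1 xfA fA (cardsD1 a D) aD.
  by rewrite !subUset !sub1set xY fY AY.
have [Z cZ [sZ aZ AZ]] := glue_fundamental (set21 a a').
have [Z' cZ' [sZ' a'Z' AZ']] := glue_fundamental (set22 a a').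
case/orP: (glue_mem fF cZ sZ aZ cZ' sZ' a'Z') => [fZ | fZ'].
  exact: long (set21 a a') cZ sZ aZ AZ fZ.
exact: long (set22 a a') cZ' sZ' a'Z' AZ' fZ'.
Qed.

End Glue.

Section Chain.
Variables (T : finType) (M : matroid T) (k : nat) (e e' : nat -> T) (C : nat -> {set T}).
Hypotheses (HM : is_matroid M)
  (e_inj : forall i j, 1 <= i <= k -> 1 <= j <= k -> e i = e j -> i = j)
  (C_card : forall i, i <= k -> 3 <= #|C i|)
  (C_link : forall i, 1 <= i <= k -> C i.-1 :&: C i = [set e i])
  (C_far : forall i j, i <= k -> j <= k -> i + 2 <= j -> C i :&: C j = set0)
  (e'_mem : forall i, 1 <= i <= k -> e' i \in C i.-1 :\: [set e i.-1; e i])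
  (C_circuit : forall i, i <= k -> circuit (contr_chain M C e e' i) (C i)).

Local Notation M_ := (contr_chain M C e e').

Lemma chain_matroid j : is_matroid (M_ j).
Proof. by elim: j => //= j IHj; apply: contract_matroid. Qed.

Lemma chain_circuit_lift j D : circuit (M_ j) D -> exists2 X, circuit M X & D \subset X.
Proof.
elim: j D => [|j IHj] D cD; first by exists D.
have [Y cY sDY] := contract_circuit_lift (chain_matroid j) cD.
by have [X cX sYX] := IHj Y cY; exists X => //; apply: subset_trans sYX.
Qed.

Let e_link i : 1 <= i <= k -> e i \in C i.-1 /\ e i \in C i.
Proof. by move/C_link/setP/(_ (e i)); rewrite !inE eqxx => /andP. Qed.

Let covered j (D : {set T}) := forall z, z \in D -> exists2 i, j <= i <= k & z \in C i.

(* For j > 0 the element glued in at step j must be e_j, the pivot of the next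
   step. *)
Let pivot j : j < k -> exists2 f, f \in C j :\: [set e j.+1; e' j.+1] & (0 < j -> f = e j).
Proof.
move=> jk; have j1 : 1 <= j.+1 <= k by [].
case: (posnP j) => [j0 | j_gt0].
  have /card_gt0P[f fC] : 0 < #|C j :\: [set e j.+1; e' j.+1]|.
    rewrite cardsD subn_gt0; apply: leq_ltn_trans (C_card (ltnW jk)).
    by apply: leq_trans (subset_leq_card (subsetIr _ _)) _; rewrite cards2; case: (_ != _).
  by exists f => //; rewrite j0.
exists (e j) => //; have j1' : 1 <= j <= k by rewrite j_gt0 ltnW.
have [_ ejC] := e_link j1'; move: (e'_mem j1); rewrite !inE ejC andbT negb_or.
case/andP=> /andP[/= ne'j _] _; rewrite negb_or (eq_sym (e j) (e' j.+1)) ne'j andbT.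
by apply/negP => /eqP/(e_inj j1' j1)/n_Sn.
Qed.

Lemma chain_step j D : j < k -> circuit (M_ j.+1) D -> e j.+1 \in D -> covered j.+1 D ->
  exists X, [/\ circuit (M_ j) X, covered j X, 0 < j -> e j \in X & #|D| < #|X|].
Proof.
move=> jk cD eD covD; have j1 : 1 <= j.+1 <= k by [].
have [ejC _] := e_link j1; have := e'_mem j1; rewrite /= !inE negb_or => /andP[/andP[_ ne'] e'C].
have DC : D :&: C j \subset [set e j.+1].
  apply/subsetP => z /setIP[zD zC]; have [i /andP[ji ik] zCi] := covD z zD.
  case: (ltngtP i j.+1) => [ij | ji2 | ij]; first by rewrite ltnNge ji in ij.
    have ji2' : j + 2 <= i by rewrite addn2.
    by have := C_far (ltnW jk) ik ji2'; move/setP/(_ z); rewrite !inE zC zCi.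
  by rewrite -C_link // inE /= zC -ij zCi.
have [f fF fj] := pivot jk.
have ne : e j.+1 != e' j.+1 by rewrite eq_sym.
have [X [cX sX fX ltDX]] :=
  circuit_glue (chain_matroid j) (C_circuit (ltnW jk)) ejC e'C ne cD eD DC fF.
exists X; split => // [z /(subsetP sX)|/fj <- //].
rewrite inE => /orP[/covD[i /andP[ji ik] zCi] | zC]; last by exists j; rewrite // leqnn ltnW.
by exists i; rewrite // ik andbT ltnW.
Qed.

Lemma chain_long_circuit j : j <= k ->
  exists D, [/\ circuit (M_ j) D, covered j D, 0 < j -> e j \in D & k - j < #|D|].
Proof.
move=> jk; move: {2}(k - j) (erefl (k - j)) => n; elim: n j jk => [|n IHn] j jk kj.
  have -> : j = k by apply/eqP; rewrite eqn_leq jk -subn_eq0 kj.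
  exists (C k); split => [||k_gt0|]; rewrite ?subnn.
  - exact: C_circuit.
  - by move=> z zC; exists k; rewrite // leqnn.
  - have k1 : 1 <= k <= k by rewrite k_gt0 leqnn.
    by case: (e_link k1).
  - by apply: leq_trans (C_card (leqnn k)).
have jk' : j < k by rewrite -subn_gt0 kj.
have kj' : k - j.+1 = n by rewrite subnS kj.
have [D [cD covD eD ltD]] := IHn j.+1 jk' kj'.
have [X [cX covX eX ltX]] := chain_step jk' cD (eD isT) covD.
by exists X; split => //; rewrite kj; apply: leq_ltn_trans ltX; rewrite -kj'.
Qed.

End Chain.

Theorem corollary3p13 (T : finType) (M : matroid T) (k : nat)
    (e e' : nat -> T) (C : nat -> {set T}) :
  is_matroid M ->
  (forall i j, 1 <= i <= k -> 1 <= j <= k -> e i = e j -> i = j) ->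
  (forall i, i <= k -> 3 <= #|C i|) ->
  (forall i, 1 <= i <= k -> C i.-1 :&: C i = [set e i]) ->
  (forall i j, i <= k -> j <= k -> i + 2 <= j -> C i :&: C j = set0) ->
  e 0 \in C 0 :\: (if 1 <= k then [set e 1] else set0) ->
  (forall i, 1 <= i <= k -> e' i \in C i.-1 :\: [set e i.-1; e i]) ->
  (forall i, i <= k -> circuit (contr_chain M C e e' i) (C i)) ->
  exists D : {set T}, circuit M D /\ \sum_(i < k.+1) #|C i| <= #|D| ^ 2.
Proof.
move=> HM e_inj C_card C_link C_far _ e'_mem C_circuit.
have [D [cD _ _]] := chain_long_circuit HM e_inj C_card C_link C_far e'_mem C_circuit (leq0n k).
rewrite subn0 => ltkD.
pose i0 := [arg max_(i > ord0 : 'I_k.+1) #|C i|].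
have [X cX sCX] := chain_circuit_lift HM (C_circuit i0 (ltn_ord i0)).
have sum_le : \sum_(i < k.+1) #|C i| <= #|D| * #|X|.
  apply: (@leq_trans (\sum_(i < k.+1) #|C i0|)).
    by apply: leq_sum => i _; rewrite /i0; case: arg_maxnP => // j _; apply.
  by rewrite sum_nat_const card_ord leq_mul // subset_leq_card.
have [leDX | ltXD] := leqP #|D| #|X|.
  by exists X; split => //; rewrite -mulnn; apply: leq_trans sum_le (leq_mul leDX (leqnn _)).
by exists D; split => //; rewrite -mulnn; apply: leq_trans sum_le (leq_mul (leqnn _) (ltnW ltXD)).
Qed.
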